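(* Let $p$ and $q$ be integers with $p$ odd and $q$ positive, and let $\omega=e^{i\pi p/q}$. Then $$\gamma(\omega)=\sum_{j=1}^{q}\omega^{j-1}\left(D_{j,q}+E_{j,p,q}\right),$$ where $$E_{j,p,q}=\log\frac{\Gamma\left(\frac{j+1}{2q}\right)\Gamma\left(\frac{j+q}{2q}\right)}{\Gamma\left(\frac{j}{2q}\right)\Gamma\left(\frac{j+q+1}{2q}\right)},\qquad D_{j,q}=\frac{1}{2q}\left[\psi\!\left(\frac12+\frac{j}{2q}\right)-\psi\!\left(\frac{j}{2q}\right)\right].$$
   Context: $\gamma(z)=\sum_{n=1}^{\infty} z^{n-1}\left(\frac{1}{n}-\log\frac{n+1}{n}\right)$ for $|z|\le1$. $\Gamma$ is Euler's gamma function and $\psi=\Gamma'/\Gamma$ is the digamma function. *)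

From Stdlib Require Import Reals ZArith.
From Coquelicot Require Import Coquelicot.
Open Scope R_scope.

Definition Gamma (x : R) : R :=
  RInt_gen (fun t => Rpower t (x - 1) * exp (- t))
           (at_right 0) (Rbar_locally p_infty).

Definition digamma (x : R) : R := Derive Gamma x / Gamma x.

(* k-th term (k = n-1, n >= 1) of the power series
   gamma(z) = sum_{n>=1} z^(n-1) (1/n - log((n+1)/n)) *)
Definition gamma_coef (n : nat) : R :=
  / INR n - ln (INR (n + 1) / INR n).

Definition gamma_term (z : C) (k : nat) : C :=
  Cmult (pow_n (K := C_Ring) z k) (RtoC (gamma_coef (S k))).

(* gamma(z) is the value of this power series (absolutely convergent for |z|<=1) *)
Definition gamma_fun_is (z v : C) : Prop := is_series (gamma_term z) v.

Definition omega (p q : Z) : C :=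
  (cos (PI * IZR p / IZR q), sin (PI * IZR p / IZR q)).

Definition E_jq (j q : nat) : R :=
  ln ((Gamma (INR (j + 1) / (2 * INR q)) * Gamma (INR (j + q) / (2 * INR q)))
      / (Gamma (INR j / (2 * INR q)) * Gamma (INR (j + q + 1) / (2 * INR q)))).

Definition D_jq (j q : nat) : R :=
  / (2 * INR q) * (digamma (/ 2 + INR j / (2 * INR q)) - digamma (INR j / (2 * INR q))).

From Stdlib Require Import Reals ZArith Lra Lia.
From Coquelicot Require Import Coquelicot.
Open Scope R_scope.

(* Since omega ^ q = -1, the weights omega ^ k of the series change sign under k -> k + q.
   Grouping the indices by their residue mod 2 q therefore turns the real and imaginary
   parts of gamma(omega) into combinations of the series sum_m [c(2qm + j) - c(2qm + q + j)],
   where c(n) = 1/n - ln(1 + 1/n).  Writing n = 2q(m + b), such a series splits into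
   (1/2q) sum_m [1/(m + b) - 1/(m + b + 1/2)], which is the digamma difference D_{j,q}, and a
   series of logarithms whose partial sums are, by Gamma(x + 1) = x Gamma(x), differences of
   ln Gamma at arguments shifted by N; the limit ln Gamma(N + x) - ln Gamma(N) - x ln N -> 0,
   which follows from the log-convexity of Gamma, identifies its sum with E_{j,q}.  Both the
   functional equation and the log-convexity come from the Euler integral (integration by
   parts and Hoelder's inequality), and the same convexity bounds on the slopes of ln Gamma
   give psi(x) = lim_N (ln(x + N) - sum_{k<N} 1/(x + k)). *)

Lemma ln_le_sub_1 y : 0 < y -> ln y <= y - 1.
Proof. intros Hy. pose proof (exp_ineq1_le (ln y)). rewrite exp_ln in *; lra. Qed.

Lemma ln_sub_le_div u v : 0 < v <= u -> 0 <= ln u - ln v <= (u - v) / v.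
Proof.
  intros Hvu. split.
  - assert (ln v <= ln u) by (apply ln_le; lra). lra.
  - pose proof (ln_le_sub_1 (u / v) ltac:(apply Rdiv_lt_0_compat; lra)) as H.
    rewrite ln_div in H by lra.
    replace (u / v - 1) with ((u - v) / v) in H by (field; lra). exact H.
Qed.

Lemma ln_succ_sub_bounds y : 0 < y -> / (y + 1) <= ln (y + 1) - ln y <= / y.
Proof.
  intros Hy. split.
  - pose proof (ln_le_sub_1 (y / (y + 1)) ltac:(apply Rdiv_lt_0_compat; lra)) as H.
    rewrite ln_div in H by lra.
    replace (y / (y + 1) - 1) with (- / (y + 1)) in H by (field; lra). lra.
  - pose proof (ln_sub_le_div (y + 1) y ltac:(lra)) as [_ H].
    replace ((y + 1 - y) / y) with (/ y) in H by (field; lra). exact H.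
Qed.

Lemma exp_le_exp_of_le x y : x <= y -> exp x <= exp y.
Proof. intros [H | ->]; [apply Rlt_le, exp_increasing, H | apply Rle_refl]. Qed.

Lemma exp_convex th u v : 0 <= th <= 1 ->
  exp (th * u + (1 - th) * v) <= th * exp u + (1 - th) * exp v.
Proof.
  intros Hth. set (m := th * u + (1 - th) * v).
  (* tangent line of exp at m, averaged with weights th and 1 - th *)
  assert (Htan : forall z, exp m * (1 + (z - m)) <= exp z).
  { intros z. replace z with (m + (z - m)) at 2 by ring. rewrite exp_plus.
    pose proof (exp_ineq1_le (z - m)). pose proof (exp_pos m). nra. }
  pose proof (Htan u). pose proof (Htan v).
  assert (th * (exp m * (1 + (u - m))) + (1 - th) * (exp m * (1 + (v - m))) = exp m)
    by (unfold m; ring).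
  nra.
Qed.

Lemma eventually_INR_gt M : eventually (fun n : nat => M < INR n).
Proof. exact (proj2 (is_lim_seq_spec INR p_infty) is_lim_seq_INR M). Qed.

Lemma is_lim_seq_ln_shift c d : is_lim_seq (fun n => ln (INR n + c) - ln (INR n + d)) 0.
Proof.
  assert (Hratio : is_lim_seq (fun n => 1 + (c - d) / (INR n + d)) 1).
  { replace (Finite 1) with (Rbar_plus 1 0) by (simpl; f_equal; ring).
    apply is_lim_seq_plus'; [apply is_lim_seq_const|].
    apply (is_lim_seq_div _ _ (c - d) p_infty); try easy.
    - apply is_lim_seq_const.
    - eapply is_lim_seq_plus; [apply is_lim_seq_INR | apply is_lim_seq_const | reflexivity].
    - apply is_Rbar_div_p_infty. }
  pose proof (is_lim_seq_continuous ln _ 1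
    (proj2 (continuity_pt_filterlim _ _) (continuous_ln 1 Rlt_0_1)) Hratio) as H.
  rewrite ln_1 in H. refine (is_lim_seq_ext_loc _ _ _ _ H).
  generalize (eventually_INR_gt (Rabs c + Rabs d)). apply filter_imp. intros n Hn.
  pose proof (Rle_abs c). pose proof (Rle_abs (- c)).
  pose proof (Rle_abs d). pose proof (Rle_abs (- d)).
  rewrite Rabs_Ropp in *.
  rewrite <- ln_div by lra. f_equal. field. lra.
Qed.

(** * The Euler integral *)

Lemma filter_prod_at_right_0_p_infty (P : R * R -> Prop) :
  (forall a b, 0 < a < 1 -> 1 < b -> P (a, b)) ->
  filter_prod (at_right 0) (Rbar_locally p_infty) P.
Proof.
  intros HP. apply Filter_prod with (Q := fun a => 0 < a < 1) (R := fun b => 1 < b).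
  - exists (mkposreal 1 Rlt_0_1). intros a Ha Ha0. split; [exact Ha0|].
    change (Rabs (a - 0) < 1) in Ha. rewrite Rminus_0_r, Rabs_pos_eq in Ha; lra.
  - exists 1. auto.
  - intros a b Ha Hb. apply HP; assumption.
Qed.

Section NonnegImproperIntegral.

Variable f : R -> R.
Hypothesis f_cont : forall t, 0 < t -> continuous f t.
Hypothesis f_ge0 : forall t, 0 < t -> 0 <= f t.

Lemma ex_RInt_pos a b : 0 < a -> 0 < b -> ex_RInt f a b.
Proof.
  intros Ha Hb. apply (ex_RInt_continuous (V := R_CompleteNormedModule)).
  intros t [Ht _]. apply f_cont. unfold Rmin in Ht. destruct (Rle_dec a b); lra.
Qed.

Lemma RInt_le_RInt_superset a' a b b' : 0 < a' -> a' <= a -> a <= b -> b <= b' ->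
  RInt f a b <= RInt f a' b'.
Proof.
  intros H1 H2 H3 H4.
  rewrite <- (RInt_Chasles f a' a b') by (apply ex_RInt_pos; lra).
  rewrite <- (RInt_Chasles f a b b') by (apply ex_RInt_pos; lra).
  assert (0 <= RInt f a' a)
    by (apply RInt_ge_0; [lra | apply ex_RInt_pos; lra | intros; apply f_ge0; lra]).
  assert (0 <= RInt f b b')
    by (apply RInt_ge_0; [lra | apply ex_RInt_pos; lra | intros; apply f_ge0; lra]).
  change plus with Rplus. lra.
Qed.

Variable B : R.
Hypothesis RInt_le_B : forall a b, 0 < a -> a <= 1 -> 1 <= b -> RInt f a b <= B.

(* the improper integral is the supremum of the integrals over the intervals [a, b] around 1 *)
Let integrals v := exists a b, 0 < a <= 1 /\ 1 <= b /\ v = RInt f a b.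

Lemma integrals_sup : {S | is_lub integrals S}.
Proof.
  apply completeness.
  - exists B. intros v (a & b & Ha & Hb & ->). apply RInt_le_B; lra.
  - exists (RInt f 1 1), 1, 1. repeat split; lra.
Qed.

Lemma RInt_le_integrals_sup a b : 0 < a -> a <= b -> RInt f a b <= proj1_sig integrals_sup.
Proof.
  intros Ha Hab. destruct integrals_sup as [S HS]. simpl.
  apply Rle_trans with (RInt f (Rmin a 1) (Rmax b 1)).
  - apply RInt_le_RInt_superset; unfold Rmin, Rmax; destruct (Rle_dec a 1), (Rle_dec b 1); lra.
  - apply (proj1 HS). exists (Rmin a 1), (Rmax b 1).
    unfold Rmin, Rmax; destruct (Rle_dec a 1), (Rle_dec b 1); repeat split; lra.
Qed.

Lemma is_RInt_gen_integrals_sup :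
  is_RInt_gen f (at_right 0) (Rbar_locally p_infty) (proj1_sig integrals_sup).
Proof.
  pose proof RInt_le_integrals_sup as Hle.
  destruct integrals_sup as [S [HS1 HS2]]. simpl in Hle |- *.
  apply filterlimi_lim_ext_loc with (f := fun ab => RInt f (fst ab) (snd ab)).
  { apply filter_prod_at_right_0_p_infty. intros a b Ha Hb.
    simpl. apply (RInt_correct (V := R_CompleteNormedModule)), ex_RInt_pos; lra. }
  apply filterlim_locally. intros eps.
  assert (exists v, integrals v /\ S - eps < v) as [v [(a1 & b1 & Ha1 & Hb1 & ->) Hv]].
  { apply Classical_Pred_Type.not_all_not_ex. intros Hn.
    enough (S <= S - eps) by (destruct eps; simpl in *; lra).
    apply HS2. intros v Hv. apply Rnot_lt_le. intros Hlt. exact (Hn v (conj Hv Hlt)). }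
  apply Filter_prod with (Q := fun a => 0 < a < a1) (R := fun b => b1 < b).
  - exists (mkposreal a1 (proj1 Ha1)). intros a Ha Ha0. split; [exact Ha0|].
    change (Rabs (a - 0) < a1) in Ha. rewrite Rminus_0_r, Rabs_pos_eq in Ha; lra.
  - exists b1. auto.
  - intros a b Ha Hb. change (Rabs (RInt f a b - S) < eps).
    assert (RInt f a1 b1 <= RInt f a b) by (apply RInt_le_RInt_superset; lra).
    assert (RInt f a b <= S) by (apply Hle; lra).
    rewrite Rabs_left1 by lra. lra.
Qed.

Lemma is_RInt_gen_nonneg_bounded : exists S,
  is_RInt_gen f (at_right 0) (Rbar_locally p_infty) S /\
  forall a b, 0 < a -> a <= b -> RInt f a b <= S.
Proof.
  exists (proj1_sig integrals_sup).
  split; [apply is_RInt_gen_integrals_sup | apply RInt_le_integrals_sup].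
Qed.

End NonnegImproperIntegral.

Lemma ex_derive_continuous_R (f : R -> R) x : ex_derive f x -> continuous f x.
Proof. exact (ex_derive_continuous (K := R_AbsRing) (V := R_NormedModule) f x). Qed.

Definition gamma_integrand (x t : R) : R := Rpower t (x - 1) * exp (- t).

Lemma gamma_integrand_pos x t : 0 < gamma_integrand x t.
Proof. apply Rmult_lt_0_compat; [apply exp_pos | apply exp_pos]. Qed.

Lemma gamma_integrand_continuous x t : 0 < t -> continuous (gamma_integrand x) t.
Proof.
  intros Ht. apply ex_derive_continuous_R. unfold gamma_integrand, Rpower. auto_derive. lra.
Qed.

Lemma ex_RInt_gamma_integrand x a b : 0 < a -> 0 < b -> ex_RInt (gamma_integrand x) a b.
Proof. apply ex_RInt_pos, gamma_integrand_continuous. Qed.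

Lemma RInt_Rpower_le_inv x a : 0 < x -> 0 < a <= 1 ->
  RInt (fun t => Rpower t (x - 1)) a 1 <= / x.
Proof.
  intros Hx Ha.
  assert (H : is_RInt (fun t => Rpower t (x - 1)) a 1
                (minus (Rpower 1 x / x) (Rpower a x / x))).
  { apply (is_RInt_derive (V := R_CompleteNormedModule) (fun t => Rpower t x / x));
      intros t Ht; unfold Rmin, Rmax in Ht; destruct (Rle_dec a 1); try lra.
    - unfold Rpower. auto_derive; [lra|].
      replace ((x - 1) * ln t) with (x * ln t + - ln t) by ring.
      rewrite exp_plus, exp_Ropp, exp_ln by lra. field. lra.
    - apply ex_derive_continuous_R. unfold Rpower. auto_derive. lra. }
  rewrite (is_RInt_unique _ _ _ _ H). unfold Rpower at 1. rewrite ln_1, Rmult_0_r, exp_0.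
  assert (0 < Rpower a x / x) by (apply Rdiv_lt_0_compat; [apply exp_pos | lra]).
  unfold minus, plus, opp, Rdiv in *; simpl. lra.
Qed.

Lemma RInt_exp_half_le M b : 0 <= M -> 1 <= b ->
  RInt (fun t => M * exp (- t / 2)) 1 b <= 2 * M.
Proof.
  intros HM Hb.
  assert (H : is_RInt (fun t => M * exp (- t / 2)) 1 b
                (minus (-2 * M * exp (- b / 2)) (-2 * M * exp (- 1 / 2)))).
  { apply (is_RInt_derive (V := R_CompleteNormedModule) (fun t => -2 * M * exp (- t / 2)));
      intros t Ht.
    - auto_derive; [auto | unfold Rdiv; field].
    - apply ex_derive_continuous_R. auto_derive. auto. }
  rewrite (is_RInt_unique _ _ _ _ H).
  assert (exp (- 1 / 2) <= 1) by (rewrite <- exp_0; apply exp_le_exp_of_le; lra).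
  pose proof (exp_pos (- b / 2)).
  unfold minus, plus, opp; simpl. nra.
Qed.

(* From ln (t / K) <= t / K - 1 with K = 2 r + 2: t ^ r <= K ^ r e ^ (t / 2) for t >= 1. *)
Definition gamma_tail_const (x : R) : R := exp (Rabs (x - 1) * ln (2 * Rabs (x - 1) + 2)).

Lemma gamma_integrand_tail_le x t : 1 <= t ->
  gamma_integrand x t <= gamma_tail_const x * exp (- t / 2).
Proof.
  intros Ht. unfold gamma_integrand, gamma_tail_const, Rpower. rewrite <- !exp_plus.
  apply exp_le_exp_of_le.
  set (r := Rabs (x - 1)). set (K := 2 * r + 2).
  assert (0 <= r) by apply Rabs_pos.
  assert (x - 1 <= r) by apply Rle_abs.
  assert (0 <= ln t) by (rewrite <- ln_1; apply ln_le; lra).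
  pose proof (ln_le_sub_1 (t / K) ltac:(unfold K; apply Rdiv_lt_0_compat; lra)) as Hln.
  rewrite ln_div in Hln by (unfold K; lra).
  assert ((x - 1) * ln t <= r * ln t) by nra.
  assert (r * ln t <= r * (ln K + t / K - 1)) by (apply Rmult_le_compat_l; lra).
  assert (r * (t / K) <= t / 2).
  { unfold K. apply Rmult_le_reg_r with (2 * r + 2); [lra|].
    replace (r * (t / (2 * r + 2)) * (2 * r + 2)) with (r * t) by (field; lra). nra. }
  nra.
Qed.

Lemma RInt_gamma_integrand_le x a b : 0 < x -> 0 < a -> a <= 1 -> 1 <= b ->
  RInt (gamma_integrand x) a b <= / x + 2 * gamma_tail_const x.
Proof.
  intros Hx Ha Ha1 Hb.
  rewrite <- (RInt_Chasles (gamma_integrand x) a 1 b) by (apply ex_RInt_gamma_integrand; lra).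
  change plus with Rplus. apply Rplus_le_compat.
  - eapply Rle_trans; [|apply (RInt_Rpower_le_inv x a); lra].
    apply RInt_le; [lra | apply ex_RInt_gamma_integrand; lra | |].
    + apply (ex_RInt_continuous (V := R_CompleteNormedModule)). intros t Ht.
      unfold Rmin in Ht. destruct (Rle_dec a 1); try lra.
      apply ex_derive_continuous_R. unfold Rpower. auto_derive. lra.
    + intros t Ht. unfold gamma_integrand.
      assert (exp (- t) <= 1) by (rewrite <- exp_0; apply exp_le_exp_of_le; lra).
      pose proof (exp_pos ((x - 1) * ln t)). unfold Rpower. nra.
  - eapply Rle_trans; [|apply (RInt_exp_half_le _ b); [left; apply exp_pos | lra]].
    apply RInt_le; [lra | apply ex_RInt_gamma_integrand; lra | |].
    + apply (ex_RInt_continuous (V := R_CompleteNormedModule)). intros t _.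
      apply ex_derive_continuous_R. auto_derive. auto.
    + intros t Ht. apply gamma_integrand_tail_le. lra.
Qed.

Lemma Gamma_spec x : 0 < x ->
  is_RInt_gen (gamma_integrand x) (at_right 0) (Rbar_locally p_infty) (Gamma x) /\
  forall a b, 0 < a -> a <= b -> RInt (gamma_integrand x) a b <= Gamma x.
Proof.
  intros Hx.
  destruct (is_RInt_gen_nonneg_bounded (gamma_integrand x) (gamma_integrand_continuous x)
              (fun t _ => Rlt_le _ _ (gamma_integrand_pos x t)) _
              (fun a b => RInt_gamma_integrand_le x a b Hx)) as [S [HS Hle]].
  replace (Gamma x) with S; [split; assumption|].
  symmetry. apply (is_RInt_gen_unique (V := R_CompleteNormedModule) _ _ HS).
Qed.

Lemma is_RInt_gen_Gamma x : 0 < x ->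
  is_RInt_gen (gamma_integrand x) (at_right 0) (Rbar_locally p_infty) (Gamma x).
Proof. intros Hx. apply (Gamma_spec x Hx). Qed.

Lemma Gamma_pos x : 0 < x -> 0 < Gamma x.
Proof.
  intros Hx. apply Rlt_le_trans with (RInt (gamma_integrand x) 1 2).
  - apply RInt_gt_0; [lra | intros; apply gamma_integrand_pos |].
    intros t Ht. apply gamma_integrand_continuous. lra.
  - apply (Gamma_spec x Hx); lra.
Qed.

(** * Functional equation and log-convexity *)

Section FunctionalEquation.

Variable x : R.
Hypothesis Hx : 0 < x.

Lemma is_derive_gamma_integrand_succ t : 0 < t ->
  is_derive (fun t => - gamma_integrand (x + 1) t) t
    (gamma_integrand (x + 1) t - x * gamma_integrand x t).
Proof.
  intros Ht. unfold gamma_integrand, Rpower. auto_derive; [lra|].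
  replace (x + 1 - 1) with x by ring.
  replace ((x - 1) * ln t) with (x * ln t + - ln t) by ring.
  rewrite exp_plus, (exp_Ropp (ln t)), exp_ln by lra. field. lra.
Qed.

Lemma gamma_integrand_succ_lim_0 :
  filterlim (fun t => - gamma_integrand (x + 1) t) (at_right 0) (locally 0).
Proof.
  apply filterlim_locally. intros eps.
  exists (mkposreal _ (exp_pos (ln eps / x))). intros t Ht Ht0.
  change (Rabs (t - 0) < exp (ln eps / x)) in Ht.
  rewrite Rminus_0_r, Rabs_pos_eq in Ht by lra.
  change (Rabs (- gamma_integrand (x + 1) t - 0) < eps).
  rewrite Rminus_0_r, Rabs_Ropp, Rabs_pos_eq by apply Rlt_le, gamma_integrand_pos.
  unfold gamma_integrand, Rpower. replace (x + 1 - 1) with x by ring.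
  assert (x * ln t < ln eps).
  { apply ln_increasing in Ht; [|lra]. rewrite ln_exp in Ht.
    apply Rmult_lt_compat_l with (r := x) in Ht; [|exact Hx].
    replace (x * (ln eps / x)) with (ln eps) in Ht by (field; lra). exact Ht. }
  assert (exp (x * ln t) < eps).
  { rewrite <- (exp_ln eps) by apply cond_pos. apply exp_increasing. assumption. }
  assert (exp (- t) <= 1) by (rewrite <- exp_0; apply exp_le_exp_of_le; lra).
  pose proof (exp_pos (x * ln t)). pose proof (exp_pos (- t)). nra.
Qed.

Lemma gamma_integrand_succ_lim_p_infty :
  filterlim (fun t => - gamma_integrand (x + 1) t) (Rbar_locally p_infty) (locally 0).
Proof.
  apply filterlim_locally. intros eps.
  set (M := gamma_tail_const (x + 1)).
  assert (0 < M) by apply exp_pos.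
  pose proof (cond_pos eps).
  exists (Rmax 1 (2 * (ln M - ln eps))). intros t Ht.
  pose proof (Rmax_l 1 (2 * (ln M - ln eps))). pose proof (Rmax_r 1 (2 * (ln M - ln eps))).
  change (Rabs (- gamma_integrand (x + 1) t - 0) < eps).
  rewrite Rminus_0_r, Rabs_Ropp, Rabs_pos_eq by apply Rlt_le, gamma_integrand_pos.
  eapply Rle_lt_trans; [apply gamma_integrand_tail_le; lra|]. fold M.
  assert (Hlt : exp (- t / 2) < exp (ln eps + - ln M)) by (apply exp_increasing; lra).
  rewrite exp_plus, exp_Ropp, !exp_ln in Hlt by lra.
  apply Rmult_lt_compat_l with (r := M) in Hlt; [|assumption].
  replace (M * (eps * / M)) with (pos eps) in Hlt by (field; lra). exact Hlt.
Qed.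

Lemma Gamma_succ : Gamma (x + 1) = x * Gamma x.
Proof.
  set (F := fun t => - gamma_integrand (x + 1) t).
  assert (HF : is_RInt_gen (Derive F) (at_right 0) (Rbar_locally p_infty) (0 - 0)).
  { apply is_RInt_gen_Derive;
      [| | apply gamma_integrand_succ_lim_0 | apply gamma_integrand_succ_lim_p_infty];
      apply filter_prod_at_right_0_p_infty; intros a b Ha Hb t Ht; simpl in Ht;
      rewrite Rmin_left, Rmax_right in Ht by lra.
    - eexists. apply is_derive_gamma_integrand_succ. lra.
    - apply (continuous_ext_loc _ (fun t => gamma_integrand (x + 1) t - x * gamma_integrand x t)).
      + exists (mkposreal (t / 2) ltac:(lra)). intros s Hs.
        change (Rabs (s - t) < t / 2) in Hs. apply Rabs_def2 in Hs.
        symmetry. apply is_derive_unique, is_derive_gamma_integrand_succ. lra.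
      + apply ex_derive_continuous_R. unfold gamma_integrand, Rpower. auto_derive. lra. }
  pose proof (is_RInt_gen_Gamma (x + 1) ltac:(lra)) as G1.
  pose proof (is_RInt_gen_Gamma x Hx) as G0.
  pose proof (is_RInt_gen_minus _ _ _ _ G1 (is_RInt_gen_scal _ x _ G0)) as HG.
  cbv beta in HG.
  apply is_RInt_gen_ext with (g := fun t => minus (gamma_integrand (x + 1) t)
                                                  (scal x (gamma_integrand x t))) in HF.
  - apply (is_RInt_gen_unique (V := R_CompleteNormedModule)) in HF, HG.
    enough (0 - 0 = Gamma (x + 1) - x * Gamma x) by lra.
    rewrite <- HF. etransitivity; [|exact HG]. reflexivity.
  - apply filter_prod_at_right_0_p_infty. intros a b Ha Hb t Ht. simpl in Ht.
    rewrite Rmin_left in Ht by lra.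
    apply is_derive_unique, is_derive_gamma_integrand_succ. lra.
Qed.

End FunctionalEquation.

(* Young's inequality under the integral: with A = ln Gamma x and B = ln Gamma y it integrates
   to Hoelder's inequality Gamma z <= Gamma x ^ th * Gamma y ^ (1 - th). *)
Lemma gamma_integrand_mix_le x y th A B t : 0 <= th <= 1 ->
  gamma_integrand (th * x + (1 - th) * y) t <=
  th * exp ((1 - th) * (B - A)) * gamma_integrand x t +
  (1 - th) * exp (- th * (B - A)) * gamma_integrand y t.
Proof.
  intros Hth. unfold gamma_integrand, Rpower. rewrite !Rmult_assoc, <- !exp_plus.
  set (u := (1 - th) * (B - A) + ((x - 1) * ln t + - t)).
  set (v := - th * (B - A) + ((y - 1) * ln t + - t)).
  replace ((th * x + (1 - th) * y - 1) * ln t + - t) with (th * u + (1 - th) * v)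
    by (unfold u, v; ring).
  apply exp_convex. exact Hth.
Qed.

Lemma ln_Gamma_convex x y th : 0 < x -> 0 < y -> 0 <= th <= 1 ->
  ln (Gamma (th * x + (1 - th) * y)) <= th * ln (Gamma x) + (1 - th) * ln (Gamma y).
Proof.
  intros Hx Hy Hth.
  set (z := th * x + (1 - th) * y). assert (Hz : 0 < z) by (unfold z; nra).
  set (A := ln (Gamma x)). set (B := ln (Gamma y)).
  pose proof (is_RInt_gen_Gamma z Hz) as Gz.
  pose proof (is_RInt_gen_Gamma x Hx) as Gx. pose proof (is_RInt_gen_Gamma y Hy) as Gy.
  pose proof (is_RInt_gen_plus _ _ _ _ (is_RInt_gen_scal _ (th * exp ((1 - th) * (B - A))) _ Gx)
                (is_RInt_gen_scal _ ((1 - th) * exp (- th * (B - A))) _ Gy)) as Gmix.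
  cbv beta in Gmix.
  assert (Hle : norm (Gamma z) <=
            plus (scal (th * exp ((1 - th) * (B - A))) (Gamma x))
                 (scal ((1 - th) * exp (- th * (B - A))) (Gamma y))).
  { refine (RInt_gen_norm (V := R_CompleteNormedModule) (Fa := at_right 0)
              (Fb := Rbar_locally p_infty) (gamma_integrand z) _ _ _ _ _ Gz Gmix);
      apply filter_prod_at_right_0_p_infty; intros a b Ha Hb; simpl; [lra|].
    intros t _. change (Rabs (gamma_integrand z t) <=
      th * exp ((1 - th) * (B - A)) * gamma_integrand x t +
      (1 - th) * exp (- th * (B - A)) * gamma_integrand y t).
    rewrite Rabs_pos_eq by apply Rlt_le, gamma_integrand_pos.
    apply gamma_integrand_mix_le. exact Hth. }
  change (Rabs (Gamma z) <= th * exp ((1 - th) * (B - A)) * Gamma x +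
                            (1 - th) * exp (- th * (B - A)) * Gamma y) in Hle.
  rewrite <- (exp_ln (Gamma x)), <- (exp_ln (Gamma y)) in Hle by (apply Gamma_pos; assumption).
  fold A B in Hle. rewrite !Rmult_assoc, <- !exp_plus in Hle.
  replace ((1 - th) * (B - A) + A) with (th * A + (1 - th) * B) in Hle by ring.
  replace (- th * (B - A) + B) with (th * A + (1 - th) * B) in Hle by ring.
  rewrite <- (ln_exp (th * A + (1 - th) * B)).
  apply ln_le; [apply Gamma_pos, Hz|].
  eapply Rle_trans; [apply Rle_abs | lra].
Qed.

(** * Asymptotics of ln Gamma *)

Fixpoint sum_lt (f : nat -> R) (n : nat) : R :=
  match n with O => 0 | S m => sum_lt f m + f m end.

Lemma sum_lt_ext f g n : (forall k, f k = g k) -> sum_lt f n = sum_lt g n.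
Proof. intros H. induction n; simpl; [reflexivity | rewrite IHn, H; reflexivity]. Qed.

Lemma sum_lt_plus f g n : sum_lt (fun k => f k + g k) n = sum_lt f n + sum_lt g n.
Proof. induction n; simpl; [ring | rewrite IHn; ring]. Qed.

Lemma sum_lt_minus f g n : sum_lt (fun k => f k - g k) n = sum_lt f n - sum_lt g n.
Proof. induction n; simpl; [ring | rewrite IHn; ring]. Qed.

Lemma sum_lt_scal c f n : sum_lt (fun k => c * f k) n = c * sum_lt f n.
Proof. induction n; simpl; [ring | rewrite IHn; ring]. Qed.

Lemma sum_lt_add f n m : sum_lt f (n + m) = sum_lt f n + sum_lt (fun k => f (n + k)%nat) m.
Proof.
  induction m as [|m IH]; simpl; [rewrite Nat.add_0_r; ring|].
  rewrite Nat.add_succ_r. simpl. rewrite IH. ring.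
Qed.

Lemma sum_n_sum_lt (f : nat -> R) n : sum_n f n = sum_lt f (S n).
Proof. induction n; [rewrite sum_O; simpl; ring | rewrite sum_Sn, IHn; reflexivity]. Qed.

Lemma is_lim_seq_sum_lt (u : nat -> nat -> R) (l : nat -> R) m :
  (forall k, (k < m)%nat -> is_lim_seq (u k) (l k)) ->
  is_lim_seq (fun n => sum_lt (fun k => u k n) m) (sum_lt l m).
Proof.
  induction m; intros H; simpl.
  - apply is_lim_seq_const.
  - apply is_lim_seq_plus'; [apply IHm; intros; apply H; lia | apply H; lia].
Qed.

Definition lnGamma (x : R) : R := ln (Gamma x).

Lemma lnGamma_succ x : 0 < x -> lnGamma (x + 1) = lnGamma x + ln x.
Proof.
  intros Hx. unfold lnGamma. rewrite Gamma_succ, ln_mult by (try apply Gamma_pos; lra). ring.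
Qed.

Lemma lnGamma_add_nat x N : 0 < x ->
  lnGamma (x + INR N) = lnGamma x + sum_lt (fun k => ln (x + INR k)) N.
Proof.
  intros Hx. induction N as [|N IH]; simpl sum_lt.
  - rewrite Rplus_0_r. ring.
  - rewrite S_INR, <- Rplus_assoc, lnGamma_succ, IH by (pose proof (pos_INR N); lra). ring.
Qed.

Lemma lnGamma_slope_le u v w : 0 < u -> u < v -> v < w ->
  (lnGamma v - lnGamma u) / (v - u) <= (lnGamma w - lnGamma v) / (w - v).
Proof.
  intros Hu Huv Hvw.
  set (th := (w - v) / (w - u)).
  assert (Hth : 0 <= th <= 1).
  { unfold th. split; [apply Rlt_le, Rdiv_lt_0_compat; lra|].
    apply Rmult_le_reg_r with (w - u); [lra|]. unfold Rdiv. rewrite Rmult_assoc, Rinv_l; lra. }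
  assert (Ev : v = th * u + (1 - th) * w) by (unfold th; field; lra).
  pose proof (ln_Gamma_convex u w th Hu ltac:(lra) Hth) as H.
  rewrite <- Ev in H. fold (lnGamma u) (lnGamma v) (lnGamma w) in H.
  assert (th * (w - u) = w - v) by (unfold th; field; lra).
  assert ((1 - th) * (w - u) = v - u) by (rewrite Ev; ring).
  apply Rmult_le_reg_r with ((v - u) * (w - v)); [nra|].
  replace ((lnGamma v - lnGamma u) / (v - u) * ((v - u) * (w - v)))
    with ((lnGamma v - lnGamma u) * (w - v)) by (field; lra).
  replace ((lnGamma w - lnGamma v) / (w - v) * ((v - u) * (w - v)))
    with ((lnGamma w - lnGamma v) * (v - u)) by (field; lra).
  nra.
Qed.

(* compare with the unit chords [u - 1, u] and [v, v + 1], whose slopes are ln (u - 1) and ln v *)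
Lemma lnGamma_slope_bounds u v : 1 < u -> u < v ->
  ln (u - 1) <= (lnGamma v - lnGamma u) / (v - u) <= ln v.
Proof.
  intros Hu Huv. split.
  - pose proof (lnGamma_slope_le (u - 1) u v ltac:(lra) ltac:(lra) Huv) as H.
    replace (u - (u - 1)) with 1 in H by ring.
    replace u with (u - 1 + 1) in H at 1 by ring.
    rewrite lnGamma_succ in H by lra. lra.
  - pose proof (lnGamma_slope_le u v (v + 1) ltac:(lra) Huv ltac:(lra)) as H.
    replace (v + 1 - v) with 1 in H by ring.
    rewrite lnGamma_succ in H by lra. lra.
Qed.

Lemma is_lim_seq_lnGamma_shift x : 0 < x ->
  is_lim_seq (fun n => lnGamma (INR n + x) - lnGamma (INR n) - x * ln (INR n)) 0.
Proof.
  intros Hx.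
  assert (Hlim : forall c, is_lim_seq (fun n => x * (ln (INR n + c) - ln (INR n + 0))) 0).
  { intros c. replace (Finite 0) with (Rbar_mult x 0) by (simpl; f_equal; ring).
    apply is_lim_seq_scal_l, is_lim_seq_ln_shift. }
  refine (is_lim_seq_le_le_loc _ _ _ 0 _ (Hlim (-1)) (Hlim x)).
  generalize (eventually_INR_gt 2). apply filter_imp. intros n Hn.
  pose proof (lnGamma_slope_bounds (INR n) (INR n + x) ltac:(lra) ltac:(lra)) as [H1 H2].
  replace (INR n + x - INR n) with x in H1, H2 by ring.
  set (s := lnGamma (INR n + x) - lnGamma (INR n)) in *.
  replace s with (x * (s / x)) by (field; lra).
  set (r := s / x) in *. rewrite Rplus_0_r. replace (INR n + -1) with (INR n - 1) by ring.
  split; nra.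
Qed.

Lemma is_lim_seq_sum_ln a b c d : 0 < a -> 0 < b -> 0 < c -> 0 < d -> c - d - a + b = 0 ->
  is_lim_seq (fun K => sum_lt (fun m => ln (c + INR m) - ln (d + INR m)
                                        - ln (a + INR m) + ln (b + INR m)) K)
    (lnGamma a + lnGamma d - lnGamma b - lnGamma c).
Proof.
  intros Ha Hb Hc Hd Habcd.
  set (e z K := lnGamma (INR K + z) - lnGamma (INR K) - z * ln (INR K)).
  apply is_lim_seq_ext with (u := fun K =>
    e c K - e d K - e a K + e b K - (lnGamma c - lnGamma d - lnGamma a + lnGamma b)).
  { intros K. rewrite sum_lt_plus, !sum_lt_minus. unfold e.
    rewrite !(Rplus_comm (INR K)), !lnGamma_add_nat by assumption.
    enough ((c - d - a + b) * ln (INR K) = 0) by lra.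
    rewrite Habcd. ring. }
  replace (lnGamma a + lnGamma d - lnGamma b - lnGamma c)
    with (0 - 0 - 0 + 0 - (lnGamma c - lnGamma d - lnGamma a + lnGamma b)) by ring.
  apply is_lim_seq_minus'; [|apply is_lim_seq_const].
  apply is_lim_seq_plus'; [|apply is_lim_seq_lnGamma_shift; assumption].
  apply is_lim_seq_minus'; [|apply is_lim_seq_lnGamma_shift; assumption].
  apply is_lim_seq_minus'; apply is_lim_seq_lnGamma_shift; assumption.
Qed.

(** * The digamma function *)

Definition shifted_harmonic (N : nat) (x : R) : R := sum_lt (fun k => / (x + INR k)) N.

Definition digamma_approx (x : R) (N : nat) : R := ln (x + INR N) - shifted_harmonic N x.

Definition digamma_lim (x : R) : R := real (Lim_seq (digamma_approx x)).

Lemma is_lim_seq_inv_shift x : is_lim_seq (fun n => / (x + INR n)) 0.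
Proof.
  replace (Finite 0) with (Rbar_inv p_infty) by reflexivity.
  apply is_lim_seq_inv; [|discriminate].
  eapply is_lim_seq_plus; [apply is_lim_seq_const | apply is_lim_seq_INR | reflexivity].
Qed.

(* decreasing, and adjacent to the increasing sequence digamma_approx x N - / (x + N) *)
Lemma is_lim_seq_digamma_approx x : 0 < x -> is_lim_seq (digamma_approx x) (digamma_lim x).
Proof.
  intros Hx.
  assert (Hstep : forall N,
    / (x + INR (S N)) <= ln (x + INR (S N)) - ln (x + INR N) <= / (x + INR N)).
  { intros N. rewrite S_INR, <- Rplus_assoc.
    apply ln_succ_sub_bounds. pose proof (pos_INR N). lra. }
  destruct (ex_lim_seq_adj (fun N => digamma_approx x N - / (x + INR N)) (digamma_approx x))
    as [_ [[l Hl] _]].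
  - intros N. specialize (Hstep N). unfold digamma_approx, shifted_harmonic. simpl sum_lt. lra.
  - intros N. specialize (Hstep N). unfold digamma_approx, shifted_harmonic. simpl sum_lt. lra.
  - apply (is_lim_seq_ext (fun N => / (x + INR N))); [intros N; ring | apply is_lim_seq_inv_shift].
  - unfold digamma_lim. rewrite (is_lim_seq_unique _ _ Hl). exact Hl.
Qed.

Lemma is_derive_sum_ln N x : 0 < x ->
  is_derive (fun y => sum_lt (fun k => ln (y + INR k)) N) x (shifted_harmonic N x).
Proof.
  intros Hx. induction N as [|N IH]; unfold shifted_harmonic; simpl.
  - apply (is_derive_const (K := R_AbsRing) (V := R_NormedModule)).
  - pose proof (pos_INR N).
    apply (is_derive_plus (K := R_AbsRing) (V := R_NormedModule)); [exact IH|].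
    auto_derive; [lra | field; lra].
Qed.

Lemma lnGamma_diff_quotient_bounds u h : 2 < u -> h <> 0 -> Rabs h < 1 ->
  ln (u - 2) <= (lnGamma (u + h) - lnGamma u) / h <= ln (u + 1).
Proof.
  intros Hu Hh0 Hh. apply Rabs_def2 in Hh.
  destruct (Rlt_le_dec 0 h) as [Hpos | Hneg].
  - pose proof (lnGamma_slope_bounds u (u + h) ltac:(lra) ltac:(lra)) as [B1 B2].
    replace (u + h - u) with h in B1, B2 by ring.
    split; [eapply Rle_trans; [|exact B1] | eapply Rle_trans; [exact B2|]]; apply ln_le; lra.
  - pose proof (lnGamma_slope_bounds (u + h) u ltac:(lra) ltac:(lra)) as [B1 B2].
    replace ((lnGamma u - lnGamma (u + h)) / (u - (u + h)))
      with ((lnGamma (u + h) - lnGamma u) / h) in B1, B2 by (field; lra).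
    split; [eapply Rle_trans; [|exact B1] | eapply Rle_trans; [exact B2|]]; apply ln_le; lra.
Qed.

(* shifting by N turns ln Gamma into ln Gamma (. + N) minus a finite sum of logarithms;
   the former has difference quotients near ln (x + N), the latter has derivative H_N(x) *)
Lemma is_derive_lnGamma x : 0 < x -> is_derive lnGamma x (digamma_lim x).
Proof.
  intros Hx. apply is_derive_Reals. intros eps Heps.
  assert (He3 : 0 < eps / 3) by lra.
  set (e3 := mkposreal _ He3).
  pose proof (proj2 (is_lim_seq_spec _ _) (is_lim_seq_digamma_approx x Hx) e3) as Ev1.
  pose proof (proj2 (is_lim_seq_spec _ _) (is_lim_seq_ln_shift (x + 1) x) e3) as Ev2.
  pose proof (proj2 (is_lim_seq_spec _ _) (is_lim_seq_ln_shift x (x - 2)) e3) as Ev3.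
  destruct (filter_and _ _ Ev1 (filter_and _ _ Ev2 (filter_and _ _ Ev3 (eventually_INR_gt 2))))
    as [N HN].
  destruct (HN N (le_n _)) as (C1 & C2 & C3 & C4); simpl in C1, C2, C3.
  rewrite Rminus_0_r, !(Rplus_comm (INR N)) in C2, C3.
  set (phi := fun y => sum_lt (fun k => ln (y + INR k)) N).
  destruct (proj1 (is_derive_Reals _ _ _) (is_derive_sum_ln N x Hx) _ He3) as [d Hd].
  assert (Hdelta : 0 < Rmin d (Rmin 1 (x / 2)))
    by (apply Rmin_pos; [apply cond_pos | apply Rmin_pos; lra]).
  exists (mkposreal _ Hdelta). intros h Hh0 Hh. simpl in Hh.
  pose proof (Rmin_l d (Rmin 1 (x / 2))). pose proof (Rmin_r d (Rmin 1 (x / 2))).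
  pose proof (Rmin_l 1 (x / 2)). pose proof (Rmin_r 1 (x / 2)).
  specialize (Hd h Hh0 ltac:(lra)).
  pose proof (lnGamma_diff_quotient_bounds (x + INR N) h ltac:(lra) Hh0 ltac:(lra)) as [Q1 Q2].
  assert (Hshift : (lnGamma (x + h) - lnGamma x) / h =
      (lnGamma (x + INR N + h) - lnGamma (x + INR N)) / h - (phi (x + h) - phi x) / h).
  { apply Rabs_def2 in Hh.
    replace (x + INR N + h) with (x + h + INR N) by ring.
    rewrite !lnGamma_add_nat by lra. unfold phi. field. exact Hh0. }
  rewrite Hshift.
  unfold digamma_approx in C1.
  replace (x + 1 + INR N) with (x + INR N + 1) in C2 by ring.
  replace (x - 2 + INR N) with (x + INR N - 2) in C3 by ring.
  apply Rabs_def2 in C1. apply Rabs_def2 in C2. apply Rabs_def2 in C3. apply Rabs_def2 in Hd.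
  unfold phi in *. apply Rabs_def1; lra.
Qed.

Lemma digamma_eq_digamma_lim x : 0 < x -> digamma x = digamma_lim x.
Proof.
  intros Hx. unfold digamma.
  assert (Hd : is_derive Gamma x (digamma_lim x * Gamma x)).
  { apply (is_derive_ext_loc (fun y => exp (lnGamma y))).
    - exists (mkposreal (x / 2) ltac:(lra)). intros y Hy.
      change (Rabs (y - x) < x / 2) in Hy. apply Rabs_def2 in Hy.
      apply exp_ln, Gamma_pos. lra.
    - rewrite <- (exp_ln (Gamma x)) by (apply Gamma_pos; lra).
      apply (is_derive_comp exp lnGamma x); [|apply is_derive_lnGamma, Hx].
      auto_derive; [auto | unfold lnGamma; ring]. }
  rewrite (is_derive_unique _ _ _ Hd). field. apply Rgt_not_eq, Gamma_pos, Hx.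
Qed.

(** * Regrouping the series *)

Lemma gamma_coef_scaled n s u : 0 < s -> 0 < u -> INR n = s * u ->
  gamma_coef n = / s * / u - (ln (u + / s) - ln u).
Proof.
  intros Hs Hu Hn. assert (0 < / s) by (apply Rinv_0_lt_compat, Hs).
  unfold gamma_coef. rewrite plus_INR, Hn. simpl INR.
  replace ((s * u + 1) / (s * u)) with ((u + / s) / u) by (field; lra).
  rewrite ln_div, Rinv_mult by lra. ring.
Qed.

Lemma gamma_coef_bounds n : (1 <= n)%nat -> 0 <= gamma_coef n <= / INR n - / (INR n + 1).
Proof.
  intros Hn. assert (1 <= INR n) by (apply (le_INR 1), Hn).
  unfold gamma_coef. rewrite plus_INR, ln_div by (simpl; lra). simpl INR.
  pose proof (ln_succ_sub_bounds (INR n) ltac:(lra)).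
  assert (/ (INR n + 1) <= / INR n) by (apply Rinv_le_contravar; lra).
  lra.
Qed.

Definition gamma_coef_pair_sum (q j K : nat) : R :=
  sum_lt (fun m => gamma_coef (2 * q * m + j) - gamma_coef (2 * q * m + q + j)) K.

Lemma gamma_coef_pair_sum_split q j K (s := 2 * INR q) (b := INR j / s) (d := b + / 2) :
  (0 < q)%nat -> (1 <= j)%nat ->
  gamma_coef_pair_sum q j K =
  / s * (shifted_harmonic K b - shifted_harmonic K d) +
  sum_lt (fun m => ln (d + / s + INR m) - ln (d + INR m)
                   - ln (b + / s + INR m) + ln (b + INR m)) K.
Proof.
  intros Hq Hj.
  assert (0 < INR q) by (apply lt_0_INR, Hq). assert (1 <= INR j) by (apply (le_INR 1), Hj).
  assert (0 < b) by (apply Rdiv_lt_0_compat; unfold s; lra).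
  unfold gamma_coef_pair_sum, shifted_harmonic.
  rewrite <- sum_lt_minus, <- sum_lt_scal, <- sum_lt_plus. apply sum_lt_ext. intros m.
  pose proof (pos_INR m).
  assert (I1 : INR (2 * q * m + j) = s * (b + INR m)).
  { rewrite plus_INR, !mult_INR. unfold b, s. simpl. field. lra. }
  assert (I2 : INR (2 * q * m + q + j) = s * (d + INR m)).
  { rewrite !plus_INR, !mult_INR. unfold d, b, s. simpl. field. lra. }
  rewrite (gamma_coef_scaled _ s (b + INR m) ltac:(unfold s; lra) ltac:(lra) I1),
          (gamma_coef_scaled _ s (d + INR m) ltac:(unfold s; lra) ltac:(unfold d; lra) I2).
  replace (b + INR m + / s) with (b + / s + INR m) by ring.
  replace (d + INR m + / s) with (d + / s + INR m) by ring.
  ring.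
Qed.

Lemma is_lim_seq_shifted_harmonic_sub b d : 0 < b -> 0 < d ->
  is_lim_seq (fun K => shifted_harmonic K b - shifted_harmonic K d)
    (digamma_lim d - digamma_lim b).
Proof.
  intros Hb Hd.
  apply (is_lim_seq_ext (fun K => digamma_approx d K - digamma_approx b K
                                  + (ln (INR K + b) - ln (INR K + d)))).
  { intros K. unfold digamma_approx. rewrite !(Rplus_comm (INR K)). ring. }
  replace (digamma_lim d - digamma_lim b) with (digamma_lim d - digamma_lim b + 0) by ring.
  apply is_lim_seq_plus'; [|apply is_lim_seq_ln_shift].
  apply is_lim_seq_minus'; apply is_lim_seq_digamma_approx; assumption.
Qed.

Lemma is_lim_seq_gamma_coef_pair_sum q j : (0 < q)%nat -> (1 <= j)%nat ->
  is_lim_seq (gamma_coef_pair_sum q j) (D_jq j q + E_jq j q).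
Proof.
  intros Hq Hj.
  assert (0 < INR q) by (apply lt_0_INR, Hq). assert (1 <= INR j) by (apply (le_INR 1), Hj).
  set (s := 2 * INR q). set (b := INR j / s). set (d := b + / 2).
  assert (0 < / s) by (apply Rinv_0_lt_compat; unfold s; lra).
  assert (0 < b) by (apply Rdiv_lt_0_compat; unfold s; lra).
  apply (is_lim_seq_ext _ _ _ (fun K => eq_sym (gamma_coef_pair_sum_split q j K Hq Hj))).
  assert (ED : D_jq j q = / s * (digamma_lim d - digamma_lim b)).
  { unfold D_jq. fold s b. rewrite (Rplus_comm (/ 2)).
    rewrite !digamma_eq_digamma_lim by (unfold d; lra). reflexivity. }
  assert (EE : E_jq j q = lnGamma (b + / s) + lnGamma d - lnGamma b - lnGamma (d + / s)).
  { unfold E_jq. fold s b.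
    replace (INR (j + 1) / s) with (b + / s) by (rewrite plus_INR; unfold b, s; simpl; field; lra).
    replace (INR (j + q) / s) with d by (rewrite plus_INR; unfold d, b, s; field; lra).
    replace (INR (j + q + 1) / s) with (d + / s)
      by (rewrite !plus_INR; unfold d, b, s; simpl; field; lra).
    pose proof (Gamma_pos b ltac:(lra)). pose proof (Gamma_pos d ltac:(unfold d; lra)).
    pose proof (Gamma_pos (b + / s) ltac:(lra)).
    pose proof (Gamma_pos (d + / s) ltac:(unfold d; lra)).
    unfold lnGamma. rewrite ln_div, !ln_mult by nra. ring. }
  rewrite ED, EE. apply is_lim_seq_plus'.
  - apply (is_lim_seq_scal_l _ _ (digamma_lim d - digamma_lim b)).
    apply is_lim_seq_shifted_harmonic_sub; unfold d; lra.
  - apply is_lim_seq_sum_ln; unfold d; lra.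
Qed.

Lemma is_series_inv_telescoping : is_series (fun k => / (INR k + 1) - / (INR k + 2)) 1.
Proof.
  enough (H : is_lim_seq (sum_n (fun k => / (INR k + 1) - / (INR k + 2))) 1) by exact H.
  apply (is_lim_seq_ext (fun n => 1 - / (2 + INR n))).
  { intros n. induction n as [|n IH].
    - rewrite sum_O. simpl. field.
    - rewrite sum_Sn, <- IH, S_INR. change plus with Rplus.
      pose proof (pos_INR n). field. lra. }
  replace (Finite 1) with (Rbar_minus 1 0) by (simpl; f_equal; ring).
  apply is_lim_seq_minus'; [apply is_lim_seq_const | apply is_lim_seq_inv_shift].
Qed.

Lemma ex_series_bounded_mul_gamma_coef (w : nat -> R) : (forall k, Rabs (w k) <= 1) ->
  ex_series (fun k => w k * gamma_coef (S k)).
Proof.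
  intros Hw. apply ex_series_Rabs.
  apply (ex_series_le (V := R_CompleteNormedModule) _ (fun k => / (INR k + 1) - / (INR k + 2)));
    [|exists 1; apply is_series_inv_telescoping].
  intros n. change (Rabs (Rabs (w n * gamma_coef (S n))) <= / (INR n + 1) - / (INR n + 2)).
  rewrite Rabs_Rabsolu, Rabs_mult.
  pose proof (gamma_coef_bounds (S n) ltac:(lia)) as [G1 G2].
  rewrite S_INR in G2. replace (INR n + 1 + 1) with (INR n + 2) in G2 by ring.
  rewrite (Rabs_pos_eq (gamma_coef (S n))) by exact G1.
  pose proof (Hw n). pose proof (Rabs_pos (w n)). nra.
Qed.

Section AntiperiodicWeights.

Variable w : nat -> R.
Variable q : nat.
Hypothesis q_pos : (0 < q)%nat.
Hypothesis w_antiperiodic : forall k, w (k + q)%nat = - w k.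
Hypothesis w_bounded : forall k, Rabs (w k) <= 1.

Lemma w_periodic K i : w (2 * q * K + i)%nat = w i.
Proof.
  induction K as [|K IH]; [f_equal; lia|].
  replace (2 * q * S K + i)%nat with (2 * q * K + i + q + q)%nat by lia.
  rewrite !w_antiperiodic, IH. ring.
Qed.

(* indices with residues r and r + q mod 2 q carry opposite weights *)
Lemma sum_lt_weighted_gamma_coef_blocks K :
  sum_lt (fun k => w k * gamma_coef (S k)) (2 * q * K) =
  sum_lt (fun r => w r * gamma_coef_pair_sum q (S r) K) q.
Proof.
  induction K as [|K IH].
  - rewrite Nat.mul_0_r. simpl.
    rewrite (sum_lt_ext _ (fun r => 0 * w r)), sum_lt_scal
      by (intros; unfold gamma_coef_pair_sum; simpl; ring).
    ring.
  - replace (2 * q * S K)%nat with (2 * q * K + (q + q))%nat by lia.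
    rewrite !sum_lt_add, IH.
    rewrite (sum_lt_ext (fun r => w r * gamma_coef_pair_sum q (S r) (S K))
       (fun r => w r * gamma_coef_pair_sum q (S r) K +
                 (w r * gamma_coef (2 * q * K + S r) + - w r * gamma_coef (2 * q * K + q + S r))))
      by (intros r; unfold gamma_coef_pair_sum; simpl; ring).
    rewrite !sum_lt_plus. f_equal. f_equal; apply sum_lt_ext; intros i.
    + rewrite w_periodic. f_equal. f_equal. lia.
    + replace (2 * q * K + (q + i))%nat with (2 * q * K + i + q)%nat by lia.
      rewrite w_antiperiodic, w_periodic. f_equal. f_equal. lia.
Qed.

Lemma is_series_antiperiodic_weighted_gamma_coef :
  is_series (fun k => w k * gamma_coef (S k))
    (sum_n (fun r => w r * (D_jq (S r) q + E_jq (S r) q)) (q - 1)).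
Proof.
  destruct (ex_series_bounded_mul_gamma_coef w w_bounded) as [l Hl].
  set (T := fun K => sum_lt (fun r => w r * gamma_coef_pair_sum q (S r) K) q).
  assert (HT : is_lim_seq T (sum_lt (fun r => w r * (D_jq (S r) q + E_jq (S r) q)) q)).
  { apply is_lim_seq_sum_lt. intros r _.
    apply (is_lim_seq_scal_l _ _ (D_jq (S r) q + E_jq (S r) q)).
    apply is_lim_seq_gamma_coef_pair_sum; lia. }
  assert (HTl : is_lim_seq T l).
  { apply is_lim_seq_incr_1.
    apply (is_lim_seq_ext (fun K => sum_n (fun k => w k * gamma_coef (S k)) (pred (2 * q * S K)))).
    { intros K. rewrite sum_n_sum_lt, Nat.succ_pred_pos by lia.
      apply sum_lt_weighted_gamma_coef_blocks. }
    apply (is_lim_seq_subseq _ _ (fun K => pred (2 * q * S K))); [|exact Hl].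
    apply eventually_subseq. intros K. lia. }
  replace (sum_n _ (q - 1)) with l; [exact Hl|].
  rewrite sum_n_sum_lt, Nat.sub_1_r, Nat.succ_pred_pos by exact q_pos.
  apply is_lim_seq_unique in HT, HTl. rewrite HT in HTl. injection HTl. auto.
Qed.

End AntiperiodicWeights.

Lemma cos_sin_PI_mul_odd p : Z.odd p = true -> cos (PI * IZR p) = -1 /\ sin (PI * IZR p) = 0.
Proof.
  intros Hp. apply Z.odd_spec in Hp as [m ->].
  assert (Hm : sin (IZR m * PI) = 0) by (apply sin_eq_0_1; exists m; reflexivity).
  replace (PI * IZR (2 * m + 1)) with (2 * (IZR m * PI) + PI)
    by (rewrite plus_IZR, mult_IZR; simpl; ring).
  rewrite neg_cos, neg_sin, cos_2a_sin, sin_2a, Hm. split; ring.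
Qed.

Lemma pow_n_cos_sin th k :
  pow_n (K := C_Ring) ((cos th, sin th) : C) k = (cos (INR k * th), sin (INR k * th)).
Proof.
  induction k as [|k IH].
  - simpl. rewrite Rmult_0_l, cos_0, sin_0. reflexivity.
  - change (Cmult (cos th, sin th) (pow_n (K := C_Ring) ((cos th, sin th) : C) k)
            = (cos (INR (S k) * th), sin (INR (S k) * th))).
    rewrite IH, S_INR.
    replace ((INR k + 1) * th) with (th + INR k * th) by ring.
    rewrite cos_plus, sin_plus. unfold Cmult. simpl. f_equal; ring.
Qed.

Lemma pow_n_omega_add p q k : Z.odd p = true -> (0 < q)%nat ->
  pow_n (K := C_Ring) (omega p (Z.of_nat q)) (k + q) =
  Copp (pow_n (K := C_Ring) (omega p (Z.of_nat q)) k).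
Proof.
  intros Hp Hq. unfold omega. rewrite !pow_n_cos_sin, <- INR_IZR_INZ.
  assert (0 < INR q) by (apply lt_0_INR, Hq).
  replace (INR (k + q) * (PI * IZR p / INR q)) with (INR k * (PI * IZR p / INR q) + PI * IZR p)
    by (rewrite plus_INR; field; lra).
  destruct (cos_sin_PI_mul_odd p Hp) as [Hc Hs].
  rewrite cos_plus, sin_plus, Hc, Hs. unfold Copp. simpl. f_equal; ring.
Qed.

Lemma pow_n_omega_bounded p q k :
  Rabs (fst (pow_n (K := C_Ring) (omega p q) k)) <= 1 /\
  Rabs (snd (pow_n (K := C_Ring) (omega p q) k)) <= 1.
Proof.
  unfold omega. rewrite pow_n_cos_sin.
  split; apply Rabs_le; [apply COS_bound | apply SIN_bound].
Qed.

Lemma sum_n_C_mul_real (z : nat -> C) (a : nat -> R) n :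
  sum_n (G := C_AbelianMonoid) (fun k => Cmult (z k) (RtoC (a k))) n =
  (sum_n (fun k => fst (z k) * a k) n, sum_n (fun k => snd (z k) * a k) n).
Proof.
  induction n as [|n IH].
  - rewrite !sum_O. unfold Cmult, RtoC. simpl. f_equal; ring.
  - rewrite !sum_Sn, IH. destruct (z (S n)) as [x y].
    unfold plus, Cmult, RtoC. simpl. unfold Cplus. simpl. f_equal; ring.
Qed.

Lemma is_series_C_mul_real (z : nat -> C) (a : nat -> R) (U V : R) :
  is_series (fun k => fst (z k) * a k) U -> is_series (fun k => snd (z k) * a k) V ->
  is_series (K := C_AbsRing) (V := C_NormedModule) (fun k => Cmult (z k) (RtoC (a k))) ((U, V) : C).
Proof.
  intros HU HV. unfold is_series. apply filterlim_locally. intros eps.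
  generalize (filter_and _ _ (proj1 (filterlim_locally _ _) HU eps)
                             (proj1 (filterlim_locally _ _) HV eps)).
  apply filter_imp. intros n [H1 H2].
  rewrite sum_n_C_mul_real. split; assumption.
Qed.

Theorem corollary31 (p : Z) (q : nat) :
  Z.odd p = true -> (0 < q)%nat ->
  is_series (gamma_term (omega p (Z.of_nat q)))
    (sum_n (G := C_AbelianMonoid)
       (fun k => Cmult (pow_n (K := C_Ring) (omega p (Z.of_nat q)) k)
                       (RtoC (D_jq (S k) q + E_jq (S k) q)))
       (q - 1)).
Proof.
  intros Hp Hq.
  set (z := fun k => pow_n (K := C_Ring) (omega p (Z.of_nat q)) k).
  rewrite (sum_n_C_mul_real z). apply is_series_C_mul_real.
  - apply (is_series_antiperiodic_weighted_gamma_coef (fun k => fst (z k))); [exact Hq | |].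
    + intros k. unfold z. rewrite pow_n_omega_add by assumption. reflexivity.
    + intros k. apply pow_n_omega_bounded.
  - apply (is_series_antiperiodic_weighted_gamma_coef (fun k => snd (z k))); [exact Hq | |].
    + intros k. unfold z. rewrite pow_n_omega_add by assumption. reflexivity.
    + intros k. apply pow_n_omega_bounded.
Qed.
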